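(* Let $n\ge 2$, let $c_k$ be a chain over $[n]$ with $1\le k\le n-1$, and let $p,q$ be distinct propositional letters. Then none of the following is derivable in $\mathbf{CPN}_n$: (i) $\neg_{c_k}p\to_{(n)}(p\to_{(n)}q)$; (ii) $(\neg_{c_k}p\to_{(n)}\neg_{c_k}q)\to_{(n)}(q\to_{(n)}p)$; (iii) $(p\to_{(n)}q)\to_{(n)}(\neg_{c_k}q\to_{(n)}\neg_{c_k}p)$; (iv) $(p\vee_{(n)}q)\wedge_{(n)}\neg_{c_k}p\to_{(n)}q$; (v) $(p\to_{(n)}q)\wedge_{(n)}\neg_{c_k}q\to_{(n)}\neg_{c_k}p$; (vi) $\neg_{c_k}p\to_{(n)}\neg_{c_k}(p\wedge_{(n)}q)$; (vii) $\neg_{c_k}p\vee_{(n)}\neg_{c_k}q\to_{(n)}\neg_{c_k}(p\wedge_{(n)}q)$; (viii) $\neg_{c_k}(p\vee_{(n)}q)\to_{(n)}\neg_{c_k}p\wedge_{(n)}\neg_{c_k}q$.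
   Context: Fix $n\in\mathbb{N}$, $n\ge 1$, and write $[n]=\{1,\dots,n\}$. Chains: a chain over $[n]$ is a finite sequence of distinct elements of $[n]$; chains with the same length and the same symbols are identified, so a chain is effectively a subset of $[n]$. $c_k$ denotes a chain with $k$ symbols, $\epsilon$ the empty chain, and $(n)$ the chain consisting of all symbols of $[n]$. For chains $c,d$: the concatenation $c\cdot d$ is the chain of symbols occurring in $c$ or in $d$; the coconcatenation $c\otimes d$ is the chain of symbols occurring in exactly one of $c,d$; $d$ is a subchain of $c$ if every symbol of $d$ is a symbol of $c$. The complementary chain $c'_{n-k}$ of $c_k$ is the chain of the symbols of $[n]$ not occurring in $c_k$. Language of $\mathbf{CPN}_n$: a countable set $P_n$ of propositional letters; constants $\perp_c$ for each chain $c$ over $[n]$ with $1\le |c|\le n-1$, and constants $\perp_{(n)}$ (contradiction) and $\top_{(n)}$ (truth); a unary connective $\neg_c$ for each nonempty chain $c$ over $[n]$ ($\neg_{(n)}$ is the strong negation; the $\neg_c$ with $|c|\le n-1$ are weak negations); a binary connective $\to_{(n)}$. Formulas: propositional letters and constants are formulas; if $\varphi,\psi$ are formulas then so are $\neg_c\varphi$ and $(\varphi\to_{(n)}\psi)$. Conventions: $\neg_\epsilon\varphi:=\varphi$, $\perp_\epsilon:=\top_{(n)}$, and $\perp_c$ for $c=(n)$ means $\perp_{(n)}$. Abbreviations: $\varphi\wedge_{(n)}\psi:=\neg_{(n)}(\varphi\to_{(n)}\neg_{(n)}\psi)$, $\varphi\vee_{(n)}\psi:=\neg_{(n)}\varphi\to_{(n)}\psi$,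 $\varphi\leftrightarrow_{(n)}\psi:=(\varphi\to_{(n)}\psi)\wedge_{(n)}(\psi\to_{(n)}\varphi)$. Axioms of $\mathbf{CPN}_n$, for all formulas $\varphi,\psi,\chi$ and all nonempty chains $c_k,c_r$ over $[n]$: (A1) $\varphi\to_{(n)}(\psi\to_{(n)}\varphi)$; (A2) $(\varphi\to_{(n)}(\psi\to_{(n)}\chi))\to_{(n)}((\varphi\to_{(n)}\psi)\to_{(n)}(\varphi\to_{(n)}\chi))$; (A3) $(\neg_{(n)}\psi\to_{(n)}\neg_{(n)}\varphi)\to_{(n)}((\neg_{(n)}\psi\to_{(n)}\varphi)\to_{(n)}\psi)$; (A4) $\varphi\to_{(n)}(\perp_{c_k}\to_{(n)}\neg_{c_k}\varphi)$; (A5) $\neg_{c_k}\neg_{c_r}\varphi\leftrightarrow_{(n)}\neg_{c_k\otimes c_r}\varphi$; (A6) $\neg_{c_k}\perp_{c_r}\leftrightarrow_{(n)}\perp_{c_k\otimes c_r}$; (A7) $\perp_{c_k}\to_{(n)}\perp_{c_r}$, whenever $c_r$ is a subchain of $c_k$. The only rule of inference is modus ponens (from $\varphi$ and $\varphi\to_{(n)}\psi$ infer $\psi$). For a set $\Sigma$ of formulas, $\Sigma\vdash_{(n)}\varphi$ means there is a finite sequence of formulas ending with $\varphi$, each of which is an axiom, a member of $\Sigma$, or obtained from two earlier members by modus ponens; $\vdash_{(n)}\varphi$ means $\emptyset\vdash_{(n)}\varphi$. *)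

(* Chains over [n] are encoded as subsets of 'I_n
   (chains with the same symbols are identified in the paper). *)
From mathcomp Require Import all_boot.
Set Implicit Arguments. Unset Strict Implicit. Unset Printing Implicit Defensive.

Definition nechain (n : nat) := {c : {set 'I_n} | c != set0}.

Definition cocat (n : nat) (c d : {set 'I_n}) : {set 'I_n} :=
  (c :\: d) :|: (d :\: c).

(* Constants: one constant Bot c for every chain c over [n]; following the
   paper's conventions, Bot set0 is top_(n) (= bot_epsilon) and Bot setT is
   bot_(n); the remaining ones are the bot_c with 1 <= |c| <= n-1.
   Negations: one unary connective Neg c for every nonempty chain c. *)
Inductive form (n : nat) : Type :=
| Var : nat -> form n
| Bot : {set 'I_n} -> form n
| Neg : nechain n -> form n -> form n
| Imp : form n -> form n -> form n.

Arguments Var {n} _.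
Arguments Bot {n} _.
Arguments Neg {n} _ _.
Arguments Imp {n} _ _.

(* neg_c phi for an arbitrary chain c, with the convention neg_eps phi := phi *)
Definition neg (n : nat) (c : {set 'I_n}) (phi : form n) : form n :=
  match insub c with
  | Some c' => Neg c' phi
  | None => phi
  end.

Definition top (n : nat) : form n := Bot set0.
Definition snot (n : nat) (phi : form n) : form n := neg setT phi.
Definition fand (n : nat) (phi psi : form n) : form n :=
  snot (Imp phi (snot psi)).
Definition for_ (n : nat) (phi psi : form n) : form n :=
  Imp (snot phi) psi.
Definition fiff (n : nat) (phi psi : form n) : form n :=
  fand (Imp phi psi) (Imp psi phi).

Inductive axiom (n : nat) : form n -> Prop :=
| A1 phi psi : axiom (Imp phi (Imp psi phi))
| A2 phi psi chi :
    axiom (Imp (Imp phi (Imp psi chi))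
               (Imp (Imp phi psi) (Imp phi chi)))
| A3 phi psi :
    axiom (Imp (Imp (snot psi) (snot phi))
               (Imp (Imp (snot psi) phi) psi))
| A4 (ck : {set 'I_n}) phi : ck != set0 ->
    axiom (Imp phi (Imp (Bot ck) (neg ck phi)))
| A5 (ck cr : {set 'I_n}) phi : ck != set0 -> cr != set0 ->
    axiom (fiff (neg ck (neg cr phi)) (neg (cocat ck cr) phi))
| A6 (ck cr : {set 'I_n}) : ck != set0 -> cr != set0 ->
    axiom (fiff (neg ck (Bot cr)) (Bot (cocat ck cr)))
| A7 (ck cr : {set 'I_n}) : ck != set0 -> cr != set0 -> cr \subset ck ->
    axiom (Imp (Bot ck) (Bot cr)).

Inductive derivable (n : nat) (Sigma : form n -> Prop) : form n -> Prop :=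
| D_ax phi : axiom phi -> derivable Sigma phi
| D_hyp phi : Sigma phi -> derivable Sigma phi
| D_mp phi psi : derivable Sigma phi -> derivable Sigma (Imp phi psi) ->
    derivable Sigma psi.

Definition theorem (n : nat) (phi : form n) : Prop :=
  derivable (fun _ => False) phi.

From mathcomp Require Import all_boot zify.

Set Implicit Arguments.
Unset Strict Implicit.

(* Every symbol [i] of [n] gives a two-valued semantics sound for CPN_n:
   [bot_c] holds iff [i] is not in [c], and [neg_c] flips the truth value
   iff [i] is in [c], so the coconcatenation in A5 and A6 becomes xor.
   A symbol outside the chain [c_k] exists since [|c_k| < n]; at such a
   symbol [neg_{c_k}] is the identity, so each of the eight formulas
   evaluates like its classical reading with [neg_{c_k}] erased, which a
   choice of truth values for [p] and [q] refutes. *)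

Section SymbolSemantics.
Variables (n : nat) (i : 'I_n) (v : nat -> bool).

Fixpoint eval (f : form n) : bool :=
  match f with
  | Var k => v k
  | Bot c => i \notin c
  | Neg c phi => (i \in val c) (+) eval phi
  | Imp phi psi => eval phi ==> eval psi
  end.

Lemma eval_neg c phi : eval (neg c phi) = (i \in c) (+) eval phi.
Proof.
rewrite /neg; case: insubP => [c' _ <- //|].
by rewrite negbK => /eqP ->; rewrite inE.
Qed.

Lemma eval_snot phi : eval (snot phi) = ~~ eval phi.
Proof. by rewrite /snot eval_neg inE. Qed.

Lemma eval_fand phi psi : eval (fand phi psi) = eval phi && eval psi.
Proof.
by rewrite /fand eval_snot /= eval_snot; case: (eval phi); case: (eval psi).
Qed.

Lemma eval_for phi psi : eval (for_ phi psi) = eval phi || eval psi.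
Proof. by rewrite /for_ /= eval_snot; case: (eval phi). Qed.

Lemma mem_cocat c d : (i \in cocat c d) = (i \in c) (+) (i \in d).
Proof. by rewrite /cocat !inE; case: (i \in c); case: (i \in d). Qed.

Lemma eval_axiom f : axiom f -> eval f.
Proof.
case=> [phi psi | phi psi chi | phi psi | c phi _ | c d phi _ _ | c d _ _ |
        c d _ _ /subsetP cd] /=.
- by case: (eval phi); case: (eval psi).
- by case: (eval phi); case: (eval psi); case: (eval chi).
- by rewrite !eval_snot; case: (eval phi); case: (eval psi).
- by rewrite eval_neg; case: (eval phi); case: (i \in c).
- rewrite /fiff eval_fand /= !eval_neg mem_cocat.
  by case: (eval phi); case: (i \in c); case: (i \in d).
- rewrite /fiff eval_fand /= !eval_neg /= mem_cocat.
  by case: (i \in c); case: (i \in d).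
- by apply/implyP; apply: contra; apply: cd.
Qed.

Lemma eval_theorem f : theorem f -> eval f.
Proof.
elim=> [phi /eval_axiom // | // | phi psi _ Hphi _ /= /implyP]; exact.
Qed.

Lemma eval_neg_notin (c : {set 'I_n}) phi :
  i \notin c -> eval (neg c phi) = eval phi.
Proof. by rewrite eval_neg => /negbTE ->. Qed.

End SymbolSemantics.

Lemma exists_notin_small_chain (n : nat) (c : {set 'I_n}) :
  #|c| < n -> exists i, i \notin c.
Proof.
move=> small; have /properP [_ [i _ ci]] : c \proper [set: 'I_n].
  by rewrite properEcard subsetT cardsT card_ord.
by exists i.
Qed.

Theorem mainTheorem12 (n : nat) (c : {set 'I_n}) (p q : nat) :
  2 <= n -> 1 <= #|c| <= n - 1 -> p != q ->
  let P := @Var n p in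
  let Q := @Var n q in
  (~ theorem (Imp (neg c P) (Imp P Q))
  /\ ~ theorem (Imp (Imp (neg c P) (neg c Q)) (Imp Q P))
  /\ ~ theorem (Imp (Imp P Q) (Imp (neg c Q) (neg c P)))
  /\ ~ theorem (Imp (fand (for_ P Q) (neg c P)) Q)
  /\ ~ theorem (Imp (fand (Imp P Q) (neg c Q)) (neg c P))
  /\ ~ theorem (Imp (neg c P) (neg c (fand P Q)))
  /\ ~ theorem (Imp (for_ (neg c P) (neg c Q)) (neg c (fand P Q)))
  /\ ~ theorem (Imp (neg c (for_ P Q)) (fand (neg c P) (neg c Q)))).
Proof.
move=> _ /andP [c_gt0 c_small] pq P Q.
have [i ci] : exists i, i \notin c.
  by apply: exists_notin_small_chain; lia.
pose val_pq (bp bq : bool) (k : nat) := if k == p then bp else bq.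
have refute bp bq f : ~~ eval i (val_pq bp bq) f -> ~ theorem f.
  by move=> /negP nf /eval_theorem.
have qp : (q == p) = false by rewrite eq_sym (negbTE pq).
split; [apply: (refute true false) | split; [apply: (refute false true) |
  split; [apply: (refute false true) | split; [apply: (refute true false) |
  split; [apply: (refute false true) | split; [apply: (refute true false) |
  split; [apply: (refute true false) | apply: (refute true false)]]]]]]];
  by rewrite /= ?(eval_fand, eval_for, eval_snot, eval_neg_notin) //=
       /val_pq ?eqxx ?qp.
Qed.
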